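(* Let $(M,d)$ be a complete separable geodesic space and $m\in\mathcal P_2(M)$ such that (A1) and (A2) hold. Assume there exist constants $p,r_0>0$ and a function $c:M\to\mathbb R_+$ such that $m(B(x,r))>c(x)r^p$ for all $x\in M$ and all $r\in(0,r_0]$. Assume there exist $\beta,L>0$ such that every loss $\ell_t$ is measurable, geodesically $\beta$-expconcave and $L$-Lipschitz, and that the \textsc{ewb} forecaster with $\beta_t=\beta$ is well defined (normalizing integrals finite and positive, $m_t\in\mathcal P_2(M)$). Let $n\ge 1/r_0$ and suppose $x_n^*\in\arg\min_{x\in M}\sum_{t=1}^n\ell_t(x)$ exists. Then \[R_n\le L+\frac1\beta\ln\frac{1}{c(x_n^* )}+\frac{p\ln n}{\beta}.\]
   Context: A geodesic is a path $\gamma:[0,1]\to M$ with $d(\gamma(s),\gamma(t))=|t-s|\,d(\gamma(0),\gamma(1))$. $f$ is geodesically convex if $t\mapsto f(\gamma(t))$ is convex for every geodesic $\gamma$; geodesically concave if $-f$ is; geodesically $\beta$-expconcave if $e^{-\beta f}$ is geodesically concave. $B(x,r)=\{y:d(x,y)<r\}$. $\mathcal P_2(M)$: Borel probability measures $\mu$ with $\int d^2(x,y)\mu(\mathrm dy)<\infty$ for all $x$; a barycenter of $\mu$ is a minimizer of $x\mapsto\int d^2(x,y)\mu(\mathrm dy)$. (A1): every $\mu\in\mathcal P_2(M)$ has a barycenter. (A2): for every $\mu\in\mathcal P_2(M)$, barycenter $x^*$ of $\mu$ and geodesically convex $f:M\to\mathbb R$ either positive or in $L^1(\mu)$, $f(x^*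 )\le\int f\,\mathrm d\mu$. Online protocol: at round $t$ the player picks $x_t$, then loss $\ell_t:M\to\mathbb R$ is revealed (arbitrary). Regret $R_n=\sum_{t=1}^n\ell_t(x_t)-\min_x\sum_{t=1}^n\ell_t(x)$. \textsc{ewb} forecaster: $m_1=m$, $\mathrm dm_{t+1}=e^{-\beta\ell_t}\mathrm dm_t/\int e^{-\beta\ell_t}\mathrm dm_t$, $x_t$ a barycenter of $m_t$. *)

From HB Require Import structures.
From mathcomp Require Import all_boot all_order all_algebra.
From mathcomp Require Import all_classical all_reals all_analysis.
Set Implicit Arguments. Unset Strict Implicit. Unset Printing Implicit Defensive.
Import Order.TTheory GRing.Theory Num.Theory.
Import numFieldNormedType.Exports.
Local Open Scope classical_set_scope.
Local Open Scope ring_scope.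

Section MetricDefs.
Context {R : realType} {M : Type} (d : M -> M -> R).

Definition is_metric : Prop :=
  [/\ forall x y, 0 <= d x y,
      forall x y, d x y = 0 <-> x = y,
      forall x y, d x y = d y x &
      forall x y z, d x z <= d x y + d y z].

Definition dball (x : M) (r : R) : set M := [set y | d x y < r].

Definition dopen (A : set M) : Prop :=
  forall x, A x -> exists2 e : R, 0 < e & dball x e `<=` A.

Definition dcomplete : Prop :=
  forall u : nat -> M,
    (forall e : R, 0 < e -> exists N, forall i j, (N <= i)%N -> (N <= j)%N -> d (u i) (u j) < e) ->
    exists l, forall e : R, 0 < e -> exists N, forall i, (N <= i)%N -> d (u i) l < e.

Definition dseparable : Prop :=
  exists u : nat -> M, forall x (e : R), 0 < e -> exists k, d x (u k) < e.

Definition geodesic (g : R -> M) : Prop :=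
  forall s t, 0 <= s <= 1 -> 0 <= t <= 1 -> d (g s) (g t) = `|t - s| * d (g 0) (g 1).

Definition geodesic_space : Prop :=
  forall x y, exists g, geodesic g /\ g 0 = x /\ g 1 = y.

Definition geod_convex (f : M -> R) : Prop :=
  forall g, geodesic g -> forall s t l, 0 <= s <= 1 -> 0 <= t <= 1 -> 0 <= l <= 1 ->
    f (g ((1 - l) * s + l * t)) <= (1 - l) * f (g s) + l * f (g t).

Definition geod_concave (f : M -> R) : Prop := geod_convex (fun x => - f x).

Definition geod_expconcave (beta : R) (f : M -> R) : Prop :=
  geod_concave (fun x => expR (- (beta * f x))).

Definition dlipschitz (L : R) (f : M -> R) : Prop :=
  forall x y, `|f x - f y| <= L * d x y.
End MetricDefs.

Section MeasDefs.
Context {R : realType} {dsp : measure_display} {M : measurableType dsp}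
  (d : M -> M -> R).
Local Open Scope ereal_scope.

Definition borel_of_metric : Prop :=
  (@measurable _ M) = <<s dopen d >>.

Definition P2 (mu : probability M R) : Prop :=
  forall x, mu.-integrable setT (fun y => ((d x y) ^+ 2)%:E).

Definition barycenter (mu : probability M R) (x : M) : Prop :=
  forall z, \int[mu]_y ((d x y) ^+ 2)%:E <= \int[mu]_y ((d z y) ^+ 2)%:E.

Definition A1 : Prop :=
  forall mu : probability M R, P2 mu -> exists x, barycenter mu x.

Definition A2 : Prop :=
  forall (mu : probability M R) (xs : M) (f : M -> R),
    P2 mu -> barycenter mu xs -> geod_convex d f ->
    (((forall x, (0 <= f x)%R) /\ measurable_fun setT f)
       \/ mu.-integrable setT (fun x => (f x)%:E)) ->
    (f xs)%:E <= \int[mu]_x (f x)%:E.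

(* EWB forecaster with constant beta, rounds indexed 1,2,...:
   mt 1 = m, d mt(t+1) = e^{-beta l_t} d mt(t) / Z_t, with 0 < Z_t < +oo,
   each mt t in P_2, and x t a barycenter of mt t. *)
Definition ewb_weight (beta : R) (l : M -> R) (y : M) : \bar R :=
  (expR (- (beta * l y)))%:E.

Definition ewb (m : probability M R) (beta : R) (l : nat -> M -> R)
    (mt : nat -> probability M R) (x : nat -> M) : Prop :=
  [/\ mt 1%N = m,
      forall t, (1 <= t)%N ->
        0 < \int[mt t]_y ewb_weight beta (l t) y < +oo,
      forall t, (1 <= t)%N -> forall A, measurable A ->
        mt t.+1 A * \int[mt t]_y ewb_weight beta (l t) y
          = \int[mt t]_(y in A) ewb_weight beta (l t) y,
      forall t, (1 <= t)%N -> P2 (mt t) &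
      forall t, (1 <= t)%N -> barycenter (mt t) (x t)].
End MeasDefs.

From HB Require Import structures.
From mathcomp Require Import all_boot all_order all_algebra.
From mathcomp Require Import all_classical all_reals all_analysis.
From mathcomp Require Import ring lra measurable_realfun.
Set Implicit Arguments.
Unset Strict Implicit.
Unset Printing Implicit Defensive.
Import Order.TTheory GRing.Theory Num.Theory.
Import numFieldNormedType.Exports.
Local Open Scope classical_set_scope.
Local Open Scope ring_scope.

(* Write w_t = exp(-beta l_t), Z_t = int w_t dm_t and P_t(A) = m_t(A).
   1. Upper bound on the normalizer: -w_t is geodesically convex
      (expconcavity), so Jensen's inequality (A2) at the barycenter x_t
      gives Z_t <= w_t(x_t).
   2. Mass transport: if l_t <= b on a measurable set A, the update rule gives
      exp(-beta b) P_t(A) <= P_(t+1)(A) Z_t.  Combined with 1 this says that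
      in round t the log-mass of A grows by at least beta (l_t(x_t) - b).
   3. Summing over t = 1..n and using P_(n+1)(A) <= 1: the forecaster is
      competitive against every set A of positive prior mass,
      beta sum_t (l_t(x_t) - b_t) <= -ln m(A).
   4. Take A = B(x*_n, 1/n): by Lipschitz continuity b_t = l_t(x*_n) + L/n
      works, and the small-ball hypothesis gives m(A) > c(x*_n) n^-p. *)

Lemma dball_measurable (R : realType) (dsp : measure_display)
    (M : measurableType dsp) (d : M -> M -> R) (y : M) (r : R) :
  is_metric d -> borel_of_metric d -> measurable (dball d y r).
Proof.
move=> [_ _ _ dtri] ->; apply: sub_sigma_algebra => z yz.
exists (r - d y z); first by rewrite subr_gt0.
move=> u zu; rewrite /dball /=; move: yz zu; rewrite /dball /=.
have := dtri y z u; lra.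
Qed.

Lemma dlipschitz_dball (R : realType) (M : Type) (d : M -> M -> R)
    (L : R) (f : M -> R) (y z : M) (r : R) :
  0 <= L -> dlipschitz d L f -> dball d y r z -> f z <= f y + L * r.
Proof.
move=> L0 lipf yz; have := lipf y z; rewrite ler_norml => /andP[fyz _].
have := ler_wpM2l L0 (ltW yz); lra.
Qed.

Lemma measurable_expR_scaled (R : realType) (dsp : measure_display)
    (M : measurableType dsp) (f : M -> R) (b : R) :
  measurable_fun setT f -> measurable_fun setT (fun y => expR (- (b * f y))).
Proof.
move=> mf; apply: measurableT_comp; first exact: measurable_expR.
apply: measurableT_comp; first exact: oppr_measurable.
by apply: measurableT_comp; first exact: mulrl_measurable.
Qed.

Lemma probability_fine (R : realType) (dsp : measure_display)
    (M : measurableType dsp) (mu : probability M R) (A : set M) :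
  measurable A -> mu A = (fine (mu A))%:E /\ 0 <= fine (mu A) <= 1.
Proof.
move=> mA.
have mu_ge0 : (0 <= mu A)%E := measure_ge0 _ _.
have mu_le1 : (mu A <= 1)%E := probability_le1 _ mA.
have finA : mu A \is a fin_num by rewrite ge0_fin_numE // (le_lt_trans mu_le1) // ltry.
split; first by rewrite fineK.
by rewrite fine_ge0 //= -lee_fin fineK.
Qed.

Section EWBForecaster.
Variables (R : realType) (dsp : measure_display) (M : measurableType dsp).
Variables (d : M -> M -> R) (m : probability M R) (beta L : R).
Variables (l : nat -> M -> R) (mt : nat -> probability M R) (x : nat -> M).
Hypothesis beta_gt0 : 0 < beta.
Hypothesis loss_measurable : forall t, (1 <= t)%N -> measurable_fun setT (l t).
Hypothesis loss_expconcave : forall t, (1 <= t)%N -> geod_expconcave d beta (l t).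
Hypothesis jensen : A2 d.
Hypothesis forecaster : ewb d m beta l mt x.

Definition normalizer (t : nat) : R :=
  fine (\int[mt t]_y ewb_weight beta (l t) y)%E.

Lemma normalizerE t : (1 <= t)%N ->
  0 < normalizer t /\ (normalizer t)%:E = (\int[mt t]_y ewb_weight beta (l t) y)%E.
Proof.
move=> t1; case: forecaster => _ Zfin _ _ _; have /andP[Z_gt0 Z_ltoo] := Zfin t t1.
have finZ : (\int[mt t]_y ewb_weight beta (l t) y)%E \is a fin_num.
  by rewrite ge0_fin_numE // ltW.
by split; rewrite /normalizer ?fineK // -lte_fin fineK.
Qed.

(* Step 1: Jensen's inequality at the barycenter, Z_t <= w_t(x_t). *)
Lemma normalizer_le_weight t : (1 <= t)%N ->
  normalizer t <= expR (- (beta * l t (x t))).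
Proof.
move=> t1; have [_ ZE] := normalizerE t1.
case: forecaster => _ Zfin _ P2mt bary.
pose w y := expR (- (beta * l t y)).
have mw : measurable_fun setT (fun y => (- w y)%:E).
  apply/measurable_EFinP; apply: measurableT_comp; first exact: oppr_measurable.
  exact: measurable_expR_scaled (loss_measurable t1).
have iw : (mt t).-integrable setT (fun y => (- w y)%:E).
  apply/integrableP; split => //.
  under eq_integral do rewrite EFinN abseN gee0_abs ?lee_fin ?expR_ge0 //.
  by have /andP[] := Zfin t t1.
have := jensen (P2mt t t1) (bary t t1) (loss_expconcave t1) (or_intror iw).
rewrite EFinN; under eq_integral do rewrite EFinN.
rewrite integral_ge0N; last by move=> *; rewrite lee_fin expR_ge0.
have -> : (\int[mt t]_y (w y)%:E)%E = (normalizer t)%:E by rewrite ZE.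
by rewrite leeN2 lee_fin.
Qed.

Lemma ewb_mass_step t (A : set M) (b : R) : (1 <= t)%N -> measurable A ->
  (forall y, A y -> l t y <= b) ->
  expR (- (beta * b)) * fine (mt t A) <= fine (mt t.+1 A) * normalizer t.
Proof.
move=> t1 mA lb; have [_ ZE] := normalizerE t1.
have [PtE _] := probability_fine (mt t) mA.
have [Pt1E _] := probability_fine (mt t.+1) mA.
case: forecaster => _ _ update _ _.
rewrite -lee_fin !EFinM -Pt1E ZE update // -PtE -integral_cst //.
apply: ge0_le_integral => //.
- by move=> *; rewrite lee_fin expR_ge0.
- apply: (measurable_funS measurableT) => //.
  by apply/measurable_EFinP; exact: measurable_expR_scaled (loss_measurable t1).
- by move=> y Ay; rewrite /ewb_weight lee_fin ler_expR lerN2 ler_pM2l // lb.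
Qed.

Lemma ewb_log_mass_gain t (A : set M) (b : R) : (1 <= t)%N -> measurable A ->
  (forall y, A y -> l t y <= b) -> 0 < fine (mt t A) ->
  0 < fine (mt t.+1 A) /\
  beta * (l t (x t) - b) <= ln (fine (mt t.+1 A)) - ln (fine (mt t A)).
Proof.
move=> t1 mA lb Pt_gt0.
have step := ewb_mass_step t1 mA lb.
have [_ /andP[Pt1_ge0 _]] := probability_fine (mt t.+1) mA.
have ZW := ler_wpM2l Pt1_ge0 (normalizer_le_weight t1).
have lhs_gt0 : 0 < expR (- (beta * b)) * fine (mt t A) by rewrite mulr_gt0 ?expR_gt0.
have Pt1_gt0 : 0 < fine (mt t.+1 A).
  rewrite lt_neqAle Pt1_ge0 andbT; apply/eqP => P0.
  by move: (le_trans step ZW); rewrite -P0 mul0r leNgt lhs_gt0.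
split => //; have := le_trans step ZW.
rewrite -ler_ln ?posrE ?mulr_gt0 ?expR_gt0 // !lnM ?posrE ?expR_gt0 // !expRK.
lra.
Qed.

Lemma ewb_regret_vs_set (A : set M) (b : nat -> R) : measurable A ->
  0 < fine (m A) -> (forall t, (1 <= t)%N -> forall y, A y -> l t y <= b t) ->
  forall n, beta * \sum_(1 <= t < n.+1) (l t (x t) - b t) <= - ln (fine (m A)).
Proof.
move=> mA mA_gt0 lb.
case: (forecaster) => mt1 _ _ _ _.
have gain n : 0 < fine (mt n.+1 A) /\
    beta * \sum_(1 <= t < n.+1) (l t (x t) - b t)
      <= ln (fine (mt n.+1 A)) - ln (fine (m A)).
  elim: n => [|n [Pn_gt0 IHn]].
    by rewrite big_geq // mulr0 mt1 subrr.
  have [Pn1_gt0 gainn] := ewb_log_mass_gain (isT : (1 <= n.+1)%N) mA (lb n.+1 isT) Pn_gt0.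
  split => //; rewrite big_nat_recr //= mulrDr; lra.
move=> n; have [_ gainn] := gain n.
have [_ /andP[_ Pn1_le1]] := probability_fine (mt n.+1) mA.
have := ln_le0 Pn1_le1; lra.
Qed.

End EWBForecaster.

Lemma ln_small_ball_mass (R : realType) (dsp : measure_display)
    (M : measurableType dsp) (d : M -> M -> R) (m : probability M R)
    (p : R) (c : M -> R) (y : M) (n : nat) :
  0 < c y -> 0 < n%:R :> R -> measurable (dball d y n%:R^-1) ->
  ((c y * n%:R^-1 `^ p)%:E < m (dball d y n%:R^-1))%E ->
  0 < fine (m (dball d y n%:R^-1)) /\
  ln (c y) - p * ln n%:R < ln (fine (m (dball d y n%:R^-1))).
Proof.
move=> c_gt0 n_gt0 mB; have [-> _] := probability_fine m mB; rewrite lte_fin => mass.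
have lb_gt0 : 0 < c y * n%:R^-1 `^ p by rewrite mulr_gt0 ?powR_gt0 ?invr_gt0.
have mass_gt0 := lt_trans lb_gt0 mass.
split => //; move: mass; rewrite -ltr_ln ?posrE //.
by rewrite lnM ?posrE ?powR_gt0 ?invr_gt0 // ln_powR lnV ?posrE // mulrN.
Qed.

Theorem mainTheorem4 (R : realType) (dsp : measure_display) (M : measurableType dsp)
  (d : M -> M -> R) (m : probability M R)
  (p r0 : R) (c : M -> R) (beta L : R)
  (l : nat -> M -> R) (mt : nat -> probability M R) (x : nat -> M)
  (n : nat) (xs : M) :
  is_metric d -> dcomplete d -> dseparable d -> geodesic_space d ->
  borel_of_metric d ->
  P2 d m -> A1 d -> A2 d ->
  0 < p -> 0 < r0 -> (forall y, 0 < c y) ->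
  (forall y r, 0 < r <= r0 -> (((c y) * r `^ p)%:E < m (dball d y r))%E) ->
  0 < beta -> 0 < L ->
  (forall t, (1 <= t)%N ->
     measurable_fun setT (l t) /\ geod_expconcave d beta (l t) /\ dlipschitz d L (l t)) ->
  ewb d m beta l mt x ->
  r0^-1 <= n%:R ->
  (forall y, \sum_(1 <= t < n.+1) l t xs <= \sum_(1 <= t < n.+1) l t y) ->
  \sum_(1 <= t < n.+1) l t (x t) - \sum_(1 <= t < n.+1) l t xs
    <= L + beta^-1 * ln ((c xs)^-1) + p * ln n%:R / beta.
Proof.
move=> metric _ _ _ borel _ _ jensen _ r0_gt0 c_gt0 small_ball beta_gt0 L_gt0
  losses forecaster n_large _.
have n_gt0 : 0 < n%:R :> R by apply: lt_le_trans n_large; rewrite invr_gt0.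
have r_in : 0 < (n%:R^-1 : R) <= r0.
  by rewrite invr_gt0 n_gt0 -[r0]invrK lef_pV2 ?posrE ?invr_gt0.
have mB := dball_measurable xs n%:R^-1 metric borel.
have [mB_gt0 ln_mB] := ln_small_ball_mass (c_gt0 xs) n_gt0 mB
  (small_ball xs _ r_in).
have lb t : (1 <= t)%N ->
    forall y, dball d xs n%:R^-1 y -> l t y <= l t xs + L * n%:R^-1.
  by move=> t1 y; have [_ [_ lip]] := losses t t1; exact: dlipschitz_dball (ltW L_gt0) lip.
have := ewb_regret_vs_set beta_gt0 (fun t t1 => (losses t t1).1)
  (fun t t1 => (losses t t1).2.1) jensen forecaster mB mB_gt0 lb n.
rewrite sumrB big_split /= sumr_const_nat subn1 /= -[_ *+ n]mulr_natr divfK ?gt_eqF //.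
rewrite mulrBr mulrDr => regret.
have -> : L + beta^-1 * ln (c xs)^-1 + p * ln n%:R / beta
    = (beta * L - ln (c xs) + p * ln n%:R) / beta.
  by rewrite lnV ?posrE //; field; rewrite gt_eqF.
rewrite ler_pdivlMr // mulrC mulrBr; lra.
Qed.
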